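(* Let $k=2$, $\Phi\equiv0$, $H$ convex, $f\ge0$, and $g=fH''\ge0$. Consider the cell-average update on a uniform mesh with zero-flux boundary conditions $$\bar u_j^{n+1}=\bar u_j^n+\mu h\,\{g(u_h^n)\}\widehat{\partial_xu_h^n}\Big|_{\partial I_j},\qquad j=1,\dots,N,$$ where $\mu=\Delta t/h^2$, $w|_{\partial I_j}:=w(x_{j+1/2})-w(x_{j-1/2})$, $\widehat{\partial_x u_h}=\beta_0\frac{[u_h]}{h}+\{\partial_xu_h\}+\beta_1h[\partial_x^2u_h]$ at interior interfaces, and the boundary terms at $x_{1/2}$ and $x_{N+1/2}$ are zero. Suppose $$\frac18<\beta_1<\frac14,\qquad \beta_0\ge1,$$ and $c_1\le c_2$ are constants with $u_h^n(x)\in[c_1,c_2]$ for all $x\in S_j=x_j+\frac h2\{-1,0,1\}$ and all $j=1,\dots,N$. If $$\mu\le\frac{1}{12\max_{j}|g_{j-1/2}|}\min\left\{\frac{1}{\beta_0+8\beta_1-2},\frac{1}{1-4\beta_1}\right\},$$ where $g_{j+1/2}=\{g(u_h^n)\}|_{x_{j+1/2}}$ for interior interfaces and $g_{1/2}=g_{N+1/2}=0$, then $\bar u_j^{n+1}\in[c_1,c_2]$ for all $j$.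
   Context: Uniform mesh of $\Omega=[a,b]$ with cells $I_j=(x_{j-1/2},x_{j+1/2})$ of length $h$, centers $x_j$; $u_h^n\in V_h=\{v: v|_{I_j}\in P^2(I_j)\}$, and $\bar u_j^n=\frac1h\int_{I_j}u_h^n\,dx$. At interior interfaces, $v^\pm$ are right/left limits, $[v]=v^+-v^-$, $\{v\}=(v^++v^-)/2$. The update is the cell-average equation of the forward Euler DG scheme for $\partial_tu=\partial_x(f(u)H''(u)\partial_xu)$ (i.e. the scheme with $\Phi=0$, $q_h=u_h$ and $f$ replaced by $fH''$). *)

From Stdlib Require Import Reals Lra List Arith.
Open Scope R_scope.

(* Uniform mesh of [a, b], b = a + N h.  Cells I_j = (x_{j-1/2}, x_{j+1/2}),
   j = 1..N.  Interfaces are indexed by i = 0..N : xface i = x_{i+1/2}. *)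
Definition xface (a h : R) (i : nat) : R := a + INR i * h.
Definition xcen (a h : R) (j : nat) : R := a + (INR j - / 2) * h.

(* u j : the (polynomial extension of the) restriction of u_h^n to I_j;
   du j, d2u j : its first and second derivatives.
   At interface x_{i+1/2} (1 <= i <= N-1): v^- comes from cell i, v^+ from cell i+1. *)
Definition jmp (v : nat -> R -> R) (a h : R) (i : nat) : R :=
  v (S i) (xface a h i) - v i (xface a h i).
Definition avgf (v : nat -> R -> R) (a h : R) (i : nat) : R :=
  (v (S i) (xface a h i) + v i (xface a h i)) / 2.

Definition interior (N i : nat) : bool := (1 <=? i)%nat && (i <? N)%nat.

Definition gface (g : R -> R) (u : nat -> R -> R) (a h : R) (N i : nat) : R :=
  if interior N i then avgf (fun j x => g (u j x)) a h i else 0.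

Definition flux (g : R -> R) (u du d2u : nat -> R -> R) (b0 b1 a h : R)
    (N i : nat) : R :=
  if interior N i then
    avgf (fun j x => g (u j x)) a h i *
      (b0 * jmp u a h i / h + avgf du a h i + b1 * h * jmp d2u a h i)
  else 0.

Definition gmax (g : R -> R) (u : nat -> R -> R) (a h : R) (N : nat) : R :=
  fold_right Rmax 0 (map (fun i => Rabs (gface g u a h N i)) (seq 0 (S N))).

Definition convex (H : R -> R) : Prop :=
  forall x y t, 0 <= t <= 1 -> H (t * x + (1 - t) * y) <= t * H x + (1 - t) * H y.

Definition is_quadratic (p : R -> R) : Prop :=
  exists c0 c1 c2 : R, forall x, p x = c0 + c1 * x + c2 * x ^ 2.

From Pilot Require Import Defs.
From Stdlib Require Import Reals Lra List Arith Lia.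
From Coquelicot Require Import Coquelicot.
Open Scope R_scope.

(* Simpson's rule is exact for quadratics, so the cell average of u_h on I_j is
   (l + 4 m + r) / 6 in terms of the nodal values l, m, r of u_h at the left end,
   centre and right end of I_j.  The derivatives of a quadratic at the cell ends are
   also linear in l, m, r, so the flux difference is a linear combination of the
   nine nodal values of I_(j-1), I_j, I_(j+1) whose coefficients sum to zero.  Hence
   the new average is an affine combination of these nine values with total weight
   one.  The bounds on beta_1 and beta_0 make the weights of the neighbouring nodes
   nonnegative, and the CFL condition makes the weights of the own nodes
   nonnegative, so the new average is a convex combination of values in [c1, c2]. *)

Lemma quadratic_derivable_pt_lim (p : R -> R) (k0 k1 k2 x l : R) :
  (forall y, p y = k0 + k1 * y + k2 * y ^ 2) ->
  derivable_pt_lim p x l -> l = k1 + 2 * k2 * x.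
Proof.
  intros Hp Hl. apply (uniqueness_limite p x); [exact Hl|].
  apply is_derive_Reals, (is_derive_ext (fun y => k0 + k1 * y + k2 * y ^ 2)).
  - intro y; symmetry; apply Hp.
  - auto_derive; auto; ring.
Qed.

Lemma RiemannInt_quadratic (p : R -> R) (k0 k1 k2 x0 x1 : R)
    (Hp : forall y, p y = k0 + k1 * y + k2 * y ^ 2)
    (pr : Riemann_integrable p x0 x1) :
  RiemannInt pr = (x1 - x0) * (p x0 + 4 * p ((x0 + x1) / 2) + p x1) / 6.
Proof.
  rewrite <- RInt_Reals. apply is_RInt_unique.
  set (F := fun y => k0 * y + k1 * y ^ 2 / 2 + k2 * y ^ 3 / 3).
  replace (_ / 6) with (minus (F x1) (F x0))
    by (rewrite !Hp; unfold minus, plus, opp, F; simpl; field).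
  apply (is_RInt_derive (V := R_CompleteNormedModule) F).
  - intros y _. rewrite Hp. unfold F. auto_derive; auto; field.
  - intros y _. apply (continuous_ext (fun y => k0 + k1 * y + k2 * y ^ 2)); [auto|].
    apply (ex_derive_continuous (fun y => k0 + k1 * y + k2 * y ^ 2)). auto_derive; auto.
Qed.

Lemma fold_right_Rmax_ub (l : list R) (x : R) : In x l -> x <= fold_right Rmax 0 l.
Proof.
  induction l as [|y l IH]; simpl; [tauto|].
  intros [<-|Hx]; [apply Rmax_l|].
  eapply Rle_trans; [apply IH, Hx|apply Rmax_r].
Qed.

Lemma mul_le_1_of_le_Rmin_inv (x d1 d2 : R) :
  0 < d1 -> 0 < d2 -> x <= Rmin (/ d1) (/ d2) -> x * d1 <= 1 /\ x * d2 <= 1.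
Proof.
  intros Hd1 Hd2 Hx.
  assert (Hle : forall d, 0 < d -> x <= / d -> x * d <= 1).
  { intros d Hd Hxd. replace 1 with (/ d * d) by (field; lra).
    apply Rmult_le_compat_r; lra. }
  split; apply Hle; auto; eapply Rle_trans; eauto; [apply Rmin_l|apply Rmin_r].
Qed.

Definition simpson (l m r : R) : R := (l + 4 * m + r) / 6.

(* [h * hat(d_x u_h)] at the interface between a cell on which u_h is the quadratic
   with nodal values l, m, r and its right neighbour with nodal values l', m', r'. *)
Definition interface_stencil (b0 b1 l m r l' m' r' : R) : R :=
  (1/2 - 4 * b1) * l + (8 * b1 - 2) * m + (3/2 - b0 - 4 * b1) * r
  + (b0 - 3/2 + 4 * b1) * l' + (2 - 8 * b1) * m' + (4 * b1 - 1/2) * r'.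

Definition cell_update (b0 b1 A B l0 m0 r0 l1 m1 r1 l2 m2 r2 : R) : R :=
  simpson l1 m1 r1 + A * interface_stencil b0 b1 l1 m1 r1 l2 m2 r2
  - B * interface_stencil b0 b1 l0 m0 r0 l1 m1 r1.

Lemma cell_update_opp (b0 b1 A B l0 m0 r0 l1 m1 r1 l2 m2 r2 : R) :
  cell_update b0 b1 A B (- l0) (- m0) (- r0) (- l1) (- m1) (- r1) (- l2) (- m2) (- r2)
  = - cell_update b0 b1 A B l0 m0 r0 l1 m1 r1 l2 m2 r2.
Proof. unfold cell_update, interface_stencil, simpson; field. Qed.

Section CellUpdateBounds.

Variables (b0 b1 w A B : R).
Hypotheses (Hb1 : / 8 < b1 < / 4) (Hb0 : 1 <= b0).
Hypotheses (HA : 0 <= A <= w) (HB : 0 <= B <= w).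
Hypotheses (Hcfl0 : 12 * w * (b0 + 8 * b1 - 2) <= 1) (Hcfl1 : 12 * w * (1 - 4 * b1) <= 1).

(* A neighbour enters only through its face weight, so its values are irrelevant
   when that weight vanishes (the faces on the boundary of the domain). *)
Lemma cell_update_lower (c l0 m0 r0 l1 m1 r1 l2 m2 r2 : R) :
  c <= l1 -> c <= m1 -> c <= r1 ->
  A = 0 \/ (c <= l2 /\ c <= m2 /\ c <= r2) ->
  B = 0 \/ (c <= l0 /\ c <= m0 /\ c <= r0) ->
  c <= cell_update b0 b1 A B l0 m0 r0 l1 m1 r1 l2 m2 r2.
Proof.
  intros hl hm hr hright hleft.
  assert (near_pos : 0 <= b0 - 3/2 + 4 * b1) by lra.
  assert (mid_pos : 0 <= 2 - 8 * b1) by lra.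
  assert (far_pos : 0 <= 4 * b1 - 1/2) by lra.
  assert (weight_l : 0 <= 1/6 - A * (4 * b1 - 1/2) - B * (b0 - 3/2 + 4 * b1)) by nra.
  assert (weight_m : 0 <= 2/3 - (A + B) * (2 - 8 * b1)) by nra.
  assert (weight_r : 0 <= 1/6 - A * (b0 - 3/2 + 4 * b1) - B * (4 * b1 - 1/2)) by nra.
  assert (right_face : 0 <= A * ((b0 - 3/2 + 4 * b1) * (l2 - c)
                                 + (2 - 8 * b1) * (m2 - c) + (4 * b1 - 1/2) * (r2 - c))).
  { destruct hright as [-> | hright]; [lra|]. apply Rmult_le_pos; [lra|].
    repeat apply Rplus_le_le_0_compat; apply Rmult_le_pos; lra. }
  assert (left_face : 0 <= B * ((4 * b1 - 1/2) * (l0 - c)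
                                + (2 - 8 * b1) * (m0 - c) + (b0 - 3/2 + 4 * b1) * (r0 - c))).
  { destruct hleft as [-> | hleft]; [lra|]. apply Rmult_le_pos; [lra|].
    repeat apply Rplus_le_le_0_compat; apply Rmult_le_pos; lra. }
  assert (convex_comb : cell_update b0 b1 A B l0 m0 r0 l1 m1 r1 l2 m2 r2 - c =
      (1/6 - A * (4 * b1 - 1/2) - B * (b0 - 3/2 + 4 * b1)) * (l1 - c)
      + (2/3 - (A + B) * (2 - 8 * b1)) * (m1 - c)
      + (1/6 - A * (b0 - 3/2 + 4 * b1) - B * (4 * b1 - 1/2)) * (r1 - c)
      + A * ((b0 - 3/2 + 4 * b1) * (l2 - c) + (2 - 8 * b1) * (m2 - c) + (4 * b1 - 1/2) * (r2 - c))
      + B * ((4 * b1 - 1/2) * (l0 - c) + (2 - 8 * b1) * (m0 - c) + (b0 - 3/2 + 4 * b1) * (r0 - c)))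
    by (unfold cell_update, interface_stencil, simpson; field).
  assert (0 <= (1/6 - A * (4 * b1 - 1/2) - B * (b0 - 3/2 + 4 * b1)) * (l1 - c)) by nra.
  assert (0 <= (2/3 - (A + B) * (2 - 8 * b1)) * (m1 - c)) by nra.
  assert (0 <= (1/6 - A * (b0 - 3/2 + 4 * b1) - B * (4 * b1 - 1/2)) * (r1 - c)) by nra.
  lra.
Qed.

Lemma cell_update_bounds (c1 c2 l0 m0 r0 l1 m1 r1 l2 m2 r2 : R) :
  c1 <= l1 <= c2 /\ c1 <= m1 <= c2 /\ c1 <= r1 <= c2 ->
  A = 0 \/ (c1 <= l2 <= c2 /\ c1 <= m2 <= c2 /\ c1 <= r2 <= c2) ->
  B = 0 \/ (c1 <= l0 <= c2 /\ c1 <= m0 <= c2 /\ c1 <= r0 <= c2) ->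
  c1 <= cell_update b0 b1 A B l0 m0 r0 l1 m1 r1 l2 m2 r2 <= c2.
Proof.
  intros hown hright hleft. split.
  - apply cell_update_lower; lra.
  - assert (-c2 <= cell_update b0 b1 A B (- l0) (- m0) (- r0) (- l1) (- m1) (- r1)
                     (- l2) (- m2) (- r2)) by (apply cell_update_lower; lra).
    rewrite cell_update_opp in *. lra.
Qed.

End CellUpdateBounds.

Definition node (u : nat -> R -> R) (a h : R) (k : nat) (s : R) : R :=
  u k (xcen a h k + s * (h / 2)).

Lemma xcen_add_half (a h : R) (k : nat) : xcen a h k + h / 2 = xface a h k.
Proof. unfold xcen, xface; field. Qed.

Lemma xcen_S_sub_half (a h : R) (k : nat) : xcen a h (S k) - h / 2 = xface a h k.
Proof. unfold xcen, xface; rewrite S_INR; field. Qed.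

Lemma xcen_sub_half (a h : R) (k : nat) :
  (1 <= k)%nat -> xcen a h k - h / 2 = xface a h (k - 1).
Proof. intro Hk; unfold xcen, xface; rewrite minus_INR by lia; simpl; field. Qed.

Lemma node_left (u : nat -> R -> R) (a h : R) (k : nat) :
  node u a h k (-1) = u k (xcen a h k - h / 2).
Proof. unfold node; f_equal; lra. Qed.

Lemma node_centre (u : nat -> R -> R) (a h : R) (k : nat) :
  node u a h k 0 = u k (xcen a h k).
Proof. unfold node; f_equal; lra. Qed.

Lemma node_right (u : nat -> R -> R) (a h : R) (k : nat) :
  node u a h k 1 = u k (xcen a h k + h / 2).
Proof. unfold node; f_equal; lra. Qed.

Lemma node_right_face (u : nat -> R -> R) (a h : R) (k : nat) :
  node u a h k 1 = u k (xface a h k).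
Proof. rewrite node_right, xcen_add_half; reflexivity. Qed.

Lemma node_left_face (u : nat -> R -> R) (a h : R) (k : nat) :
  node u a h (S k) (-1) = u (S k) (xface a h k).
Proof. rewrite node_left, xcen_S_sub_half; reflexivity. Qed.

Section QuadraticCells.

Variables (u du d2u : nat -> R -> R) (a h : R).
Hypothesis hpos : 0 < h.
Hypothesis Hquad : forall j, is_quadratic (u j).
Hypothesis Hdu : forall j x, derivable_pt_lim (u j) x (du j x).
Hypothesis Hd2u : forall j x, derivable_pt_lim (du j) x (d2u j x).

Lemma cell_du_right (j : nat) :
  du j (xface a h j) = (3 * node u a h j 1 - 4 * node u a h j 0 + node u a h j (-1)) / h.
Proof.
  destruct (Hquad j) as (k0 & k1 & k2 & Hk).
  rewrite <- xcen_add_half, (quadratic_derivable_pt_lim _ k0 k1 k2 _ _ Hk (Hdu j _)).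
  rewrite node_left, node_centre, node_right, !Hk. field; lra.
Qed.

Lemma cell_du_left (j : nat) :
  du (S j) (xface a h j)
  = (- node u a h (S j) 1 + 4 * node u a h (S j) 0 - 3 * node u a h (S j) (-1)) / h.
Proof.
  destruct (Hquad (S j)) as (k0 & k1 & k2 & Hk).
  rewrite <- xcen_S_sub_half, (quadratic_derivable_pt_lim _ k0 k1 k2 _ _ Hk (Hdu _ _)).
  rewrite node_left, node_centre, node_right, !Hk. field; lra.
Qed.

Lemma cell_d2u (j : nat) (x : R) :
  d2u j x = 4 * (node u a h j 1 - 2 * node u a h j 0 + node u a h j (-1)) / h ^ 2.
Proof.
  destruct (Hquad j) as (k0 & k1 & k2 & Hk).
  assert (Hdk : forall y, du j y = k1 + 2 * k2 * y + 0 * y ^ 2).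
  { intro y. rewrite (quadratic_derivable_pt_lim _ k0 k1 k2 _ _ Hk (Hdu j y)). ring. }
  rewrite (quadratic_derivable_pt_lim _ _ _ _ _ _ Hdk (Hd2u j x)).
  rewrite node_left, node_centre, node_right, !Hk. field; lra.
Qed.

Lemma cell_average (j : nat) (Hj : (1 <= j)%nat)
    (pr : Riemann_integrable (u j) (xface a h (j - 1)) (xface a h j)) :
  RiemannInt pr / h = simpson (node u a h j (-1)) (node u a h j 0) (node u a h j 1).
Proof.
  destruct (Hquad j) as (k0 & k1 & k2 & Hk).
  rewrite (RiemannInt_quadratic _ k0 k1 k2 _ _ Hk pr).
  rewrite <- (xcen_sub_half a h j Hj), <- xcen_add_half, node_left, node_centre, node_right.
  replace ((xcen a h j - h / 2 + (xcen a h j + h / 2)) / 2) with (xcen a h j) by field.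
  unfold simpson; field; lra.
Qed.

Lemma flux_eq_stencil (g : R -> R) (b0 b1 : R) (N i : nat) :
  h * flux g u du d2u b0 b1 a h N i
  = gface g u a h N i
    * interface_stencil b0 b1 (node u a h i (-1)) (node u a h i 0) (node u a h i 1)
        (node u a h (S i) (-1)) (node u a h (S i) 0) (node u a h (S i) 1).
Proof.
  unfold flux, gface. destruct (Defs.interior N i); [|ring].
  set (gi := avgf _ a h i).
  unfold jmp, avgf.
  rewrite cell_du_right, cell_du_left, !cell_d2u.
  rewrite <- node_right_face, <- node_left_face.
  unfold interface_stencil; field; lra.
Qed.

End QuadraticCells.

Lemma cell_update_eq (u du d2u : nat -> R -> R) (g : R -> R) (a h dt b0 b1 : R) (N j : nat)
    (hpos : 0 < h) (Hquad : forall j, is_quadratic (u j))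
    (Hdu : forall j x, derivable_pt_lim (u j) x (du j x))
    (Hd2u : forall j x, derivable_pt_lim (du j) x (d2u j x))
    (Hj : (1 <= j)%nat)
    (pr : Riemann_integrable (u j) (xface a h (j - 1)) (xface a h j)) :
  RiemannInt pr / h + dt / h ^ 2 * h * (flux g u du d2u b0 b1 a h N j
                                        - flux g u du d2u b0 b1 a h N (j - 1))
  = cell_update b0 b1 (dt / h ^ 2 * gface g u a h N j) (dt / h ^ 2 * gface g u a h N (j - 1))
      (node u a h (j - 1) (-1)) (node u a h (j - 1) 0) (node u a h (j - 1) 1)
      (node u a h j (-1)) (node u a h j 0) (node u a h j 1)
      (node u a h (S j) (-1)) (node u a h (S j) 0) (node u a h (S j) 1).
Proof.
  rewrite (cell_average u a h hpos Hquad j Hj pr), Rmult_assoc, Rmult_minus_distr_l.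
  rewrite !(flux_eq_stencil u du d2u a h hpos Hquad Hdu Hd2u).
  replace (S (j - 1)) with j by lia.
  unfold cell_update; ring.
Qed.

Lemma interior_spec (N i : nat) : Defs.interior N i = true <-> (1 <= i < N)%nat.
Proof. unfold Defs.interior. rewrite Bool.andb_true_iff, Nat.leb_le, Nat.ltb_lt. reflexivity. Qed.

Lemma interior_or_gface_0 (g : R -> R) (u : nat -> R -> R) (a h : R) (N i : nat) :
  Defs.interior N i = true \/ gface g u a h N i = 0.
Proof. unfold gface. destruct (Defs.interior N i); auto. Qed.

Lemma gface_nonneg (g : R -> R) (u : nat -> R -> R) (a h : R) (N i : nat) :
  (forall x, 0 <= g x) -> 0 <= gface g u a h N i.
Proof.
  intro Hg. unfold gface, avgf. destruct (Defs.interior N i); [|lra].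
  pose proof (Hg (u (S i) (xface a h i))). pose proof (Hg (u i (xface a h i))). lra.
Qed.

Lemma gface_le_gmax (g : R -> R) (u : nat -> R -> R) (a h : R) (N i : nat) :
  (i <= N)%nat -> gface g u a h N i <= gmax g u a h N.
Proof.
  intro Hi. eapply Rle_trans; [apply Rle_abs|].
  apply fold_right_Rmax_ub, (in_map (fun i => Rabs (gface g u a h N i))), in_seq. lia.
Qed.

Theorem theorem3p4
  (f H H1 H2 g : R -> R)
  (HH1 : forall x, derivable_pt_lim H x (H1 x))
  (HH2 : forall x, derivable_pt_lim H1 x (H2 x))
  (Hconv : convex H)
  (Hf : forall x, 0 <= f x)
  (Hg : forall x, g x = f x * H2 x)
  (Hgnn : forall x, 0 <= g x)
  (a h dt : R) (N : nat) (hpos : 0 < h) (dtpos : 0 < dt) (HN : (1 <= N)%nat)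
  (u du d2u : nat -> R -> R)
  (Hquad : forall j, is_quadratic (u j))
  (Hdu : forall j x, derivable_pt_lim (u j) x (du j x))
  (Hd2u : forall j x, derivable_pt_lim (du j) x (d2u j x))
  (b0 b1 c1 c2 : R)
  (Hb1 : / 8 < b1 < / 4) (Hb0 : 1 <= b0) (Hc : c1 <= c2)
  (Hbounds : forall j : nat, (1 <= j <= N)%nat ->
      forall s, In s (-1 :: 0 :: 1 :: nil) ->
      c1 <= u j (xcen a h j + s * (h / 2)) <= c2)
  (Hcfl : dt / h ^ 2 * (12 * gmax g u a h N)
          <= Rmin (/ (b0 + 8 * b1 - 2)) (/ (1 - 4 * b1))) :
  forall j : nat, (1 <= j <= N)%nat ->
  forall pr : Riemann_integrable (u j) (xface a h (j - 1)) (xface a h j),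
    c1 <= RiemannInt pr / h
          + dt / h ^ 2 * h * (flux g u du d2u b0 b1 a h N j
                              - flux g u du d2u b0 b1 a h N (j - 1))
       <= c2.
Proof.
  intros j Hj pr.
  rewrite (cell_update_eq u du d2u g a h dt b0 b1 N j hpos Hquad Hdu Hd2u ltac:(lia) pr).
  assert (Hmu : 0 < dt / h ^ 2) by (apply Rdiv_lt_0_compat; [lra|apply pow_lt; lra]).
  assert (weight : forall i, (i <= N)%nat ->
    0 <= dt / h ^ 2 * gface g u a h N i <= dt / h ^ 2 * gmax g u a h N).
  { intros i Hi. split.
    - apply Rmult_le_pos; [lra|apply gface_nonneg, Hgnn].
    - apply Rmult_le_compat_l; [lra|apply gface_le_gmax, Hi]. }
  assert (cell_in : forall k, (1 <= k <= N)%nat ->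
    c1 <= node u a h k (-1) <= c2 /\ c1 <= node u a h k 0 <= c2 /\ c1 <= node u a h k 1 <= c2).
  { intros k Hk. unfold node. repeat split; apply Hbounds; simpl; tauto. }
  destruct (mul_le_1_of_le_Rmin_inv _ (b0 + 8 * b1 - 2) (1 - 4 * b1)
              ltac:(lra) ltac:(lra) Hcfl) as [cfl0 cfl1].
  apply (cell_update_bounds b0 b1 (dt / h ^ 2 * gmax g u a h N));
    try (apply weight; lia); try lra; try (apply cell_in; lia).
  - destruct (interior_or_gface_0 g u a h N j) as [Hi | ->]; [right | left; ring].
    apply interior_spec in Hi. apply cell_in; lia.
  - destruct (interior_or_gface_0 g u a h N (j - 1)) as [Hi | ->]; [right | left; ring].
    apply interior_spec in Hi. apply cell_in; lia.
Qed.
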